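(* Let $V$ be a finite-dimensional complex vector space with a Hermitian inner product, $\mathbf G$ a finite group of unitary transformations of $V$, and $\mathbf x_0\in V$ a unit vector with full orbit under $\mathbf G$. If $H\le K\le\mathbf G$ and $\operatorname{CL}$ is a greed compatible set of left coset representatives of $H$ in $K$ containing $I$, then every element of $\operatorname{CL}$ is minimal.
   Context: Full orbit: $|\mathbf G\mathbf x_0|=|\mathbf G|$. For a subgroup $H$, $\operatorname{FR}(H)=\{\mathbf x:\|\mathbf x-\mathbf x_0\|<\|h\mathbf x-\mathbf x_0\|\ \forall h\in H\setminus\operatorname{Stab}_H(\mathbf x_0)\}$. $\operatorname{CL}$ is greed compatible if for every $\mathbf x\in\operatorname{FR}(H)$ there is $c\in\operatorname{CL}$ with $c\mathbf x\in\operatorname{FR}(K)$. An element $c\in\operatorname{CL}$ is minimal if $\mathbf x_0\in c(\operatorname{FR}(H))$. *)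

From mathcomp Require Import all_boot all_algebra all_fingroup reals complex.
Set Implicit Arguments. Unset Strict Implicit. Unset Printing Implicit Defensive.
Import GRing.Theory Num.Theory.
Local Open Scope ring_scope.

Section Defs.
Variables (R : realType) (n : nat).
Local Notation C := (R[i]).
Local Notation V := 'cV[C]_n.

Definition hdot (u v : V) : C := \sum_(i < n) u i 0 * (v i 0)^*.
Definition hnorm (x : V) : C := sqrtC (hdot x x).

Definition adjmx (A : 'M[C]_n) : 'M[C]_n := map_mx Num.conj A^T.
Definition unitary (A : 'M[C]_n) : Prop := adjmx A *m A = 1%:M.

Variables (gT : finGroupType) (rho : gT -> 'M[C]_n) (x0 : V).

Definition stab (H : {set gT}) : {set gT} := [set h in H | rho h *m x0 == x0].

Definition FR (H : {set gT}) (x : V) : Prop :=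
  forall h, h \in H -> h \notin stab H -> hnorm (x - x0) < hnorm (rho h *m x - x0).

Definition greed_compatible (H K CL : {set gT}) : Prop :=
  forall x, FR H x -> exists2 c, c \in CL & FR K (rho c *m x).

Definition minimal (H : {set gT}) (c : gT) : Prop :=
  exists2 x, FR H x & rho c *m x = x0.
End Defs.

(** Let [c] be a coset representative and [p := c^-1 x0]; we show that [p]
    lies in FR(H), so that [c] maps it to [x0].  Otherwise some nontrivial
    element of [H] brings [p] at least as close to [x0], and choosing the best
    one, [h], the point [q := h p] is nearest to [x0] within its orbit [H q].
    Moving [q] a little towards [x0] gives a point [x] of FR(H) which is
    strictly nearer to [q] than to any other point of the orbit [G x0].  Greed
    compatibility yields [c'] in CL with [c' x] in FR(K); as [x0] is then the
    nearest point of [K x0] to [c' x] and the orbit is full, [c' = c h^-1].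
    So [c] and [c'] represent the same coset [c H], and [h = 1]. *)
From mathcomp Require Import all_boot all_algebra all_fingroup reals complex.
From mathcomp Require Import ring lra.
Import order.Order.TTheory GRing.Theory Num.Theory.
Set Implicit Arguments. Unset Strict Implicit. Unset Printing Implicit Defensive.
Local Open Scope ring_scope.

Lemma small_step_pos (R : realFieldType) (I : finType) (P : pred I) (a b : I -> R) :
  {in P, forall i, 0 < a i} ->
  exists2 t : R, 0 < t <= 1 & {in P, forall i, 0 < a i + t * b i}.
Proof.
move=> a_gt0; set M := \sum_(i | P i) (`|b i| / a i).
have ba_ge0 i : P i -> 0 <= `|b i| / a i.
  by move=> Pi; rewrite divr_ge0 // ltW // a_gt0.
have M_ge0 : 0 <= M by apply: sumr_ge0.
set t := (1 + M)^-1.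
have t_gt0 : 0 < t by rewrite invr_gt0; lra.
have tM : t * (1 + M) = 1 by rewrite mulVf // gt_eqF //; lra.
exists t; first by rewrite t_gt0 /= invf_le1; lra.
move=> i Pi; have ai_gt0 := a_gt0 i Pi.
have : `|b i| / a i <= M.
  by rewrite /M (bigD1 i) //= lerDl; apply: sumr_ge0 => j /andP[/ba_ge0].
rewrite ler_pdivrMr // => biM.
have := ler_norm (- b i); rewrite normrN => bi_ge.
nra.
Qed.

Lemma uniq_map_inj_in (T1 T2 : eqType) (f : T1 -> T2) (s : seq T1) :
  uniq (map f s) -> {in s &, injective f}.
Proof.
move=> fs_uniq x y xs ys fxy.
move/(uniqP (f x)): fs_uniq => /(_ (index x s) (index y s)).
rewrite !inE size_map !index_mem xs ys !(nth_map x) ?index_mem // !nth_index //.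
by move=> /(_ isT isT fxy) /(congr1 (nth x s)); rewrite !nth_index.
Qed.

Section HermitianNorm.
Variables (R : realType) (n : nat).
Local Notation C := (R[i]).
Local Notation V := 'cV[C]_n.

Lemma hdot_unitary (A : 'M[C]_n) (u v : V) :
  unitary A -> hdot (A *m u) (A *m v) = hdot u v.
Proof.
have hdotE (x y : V) : hdot x y = (map_mx Num.conj y^T *m x) 0 0.
  by rewrite /hdot mxE; apply: eq_bigr => i _; rewrite !mxE mulrC.
move=> AA; rewrite !hdotE trmx_mul map_mxM -mulmxA (mulmxA _ A).
by rewrite -[map_mx _ A^T]/(adjmx A) AA mul1mx.
Qed.

Lemma hdotDl (u1 u2 v : V) : hdot (u1 + u2) v = hdot u1 v + hdot u2 v.
Proof. by rewrite /hdot -big_split; apply: eq_bigr => i _; rewrite mxE mulrDl. Qed.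

Lemma hdotDr (u v1 v2 : V) : hdot u (v1 + v2) = hdot u v1 + hdot u v2.
Proof. by rewrite /hdot -big_split; apply: eq_bigr => i _; rewrite mxE rmorphD mulrDr. Qed.

Lemma hdotZl a (u v : V) : hdot (a *: u) v = a * hdot u v.
Proof. by rewrite /hdot mulr_sumr; apply: eq_bigr => i _; rewrite mxE mulrA. Qed.

Lemma hdotZr a (u v : V) : hdot u (a *: v) = a^* * hdot u v.
Proof. by rewrite /hdot mulr_sumr; apply: eq_bigr => i _; rewrite mxE rmorphM mulrCA. Qed.

Lemma hdotC (u v : V) : hdot v u = (hdot u v)^*.
Proof.
by rewrite /hdot rmorph_sum; apply: eq_bigr => i _; rewrite rmorphM /= conjCK mulrC.
Qed.

Lemma conjC_real (t : R) : (t%:C%C)^* = t%:C%C :> C.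
Proof. exact: conjc_real. Qed.

Definition sqnorm (u : V) : R :=
  \sum_(i < n) (complex.Re (u i 0) ^+ 2 + complex.Im (u i 0) ^+ 2).

Definition redot (u v : V) : R := complex.Re (hdot u v).

Lemma hdotii (u : V) : hdot u u = (sqnorm u)%:C%C.
Proof.
rewrite /hdot /sqnorm rmorph_sum; apply: eq_bigr => i _.
by case: (u i 0) => a b; rewrite /GRing.mul /=; congr Complex; ring.
Qed.

Lemma sqnorm_ge0 (u : V) : 0 <= sqnorm u.
Proof. by apply: sumr_ge0 => i _; rewrite addr_ge0 ?sqr_ge0. Qed.

Lemma sqnorm_gt0 (u : V) : u != 0 -> 0 < sqnorm u.
Proof.
move=> u_neq0; rewrite lt_def sqnorm_ge0 andbT; apply: contra u_neq0.
rewrite psumr_eq0 => [/allP u0|i _]; last by rewrite addr_ge0 ?sqr_ge0.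
apply/eqP/matrixP => i j; rewrite ord1 mxE.
move: (u0 i (mem_index_enum i)); rewrite /= paddr_eq0 ?sqr_ge0 // !sqrf_eq0.
by case: (u i 0) => a b /andP[/eqP/= -> /eqP/= ->].
Qed.

Lemma ltr_hnorm (u v : V) : (hnorm u < hnorm v) = (sqnorm u < sqnorm v).
Proof. by rewrite /hnorm !hdotii ltr_sqrtC ?ltcR // qualifE /= ler0c sqnorm_ge0. Qed.

Lemma sqnorm_unitary (A : 'M[C]_n) (u : V) : unitary A -> sqnorm (A *m u) = sqnorm u.
Proof. by move=> AA; apply: (@complexI R); rewrite -!hdotii hdot_unitary. Qed.

Lemma sqnormZ (t : R) (w : V) : sqnorm (t%:C%C *: w) = t ^+ 2 * sqnorm w.
Proof.
apply: (@complexI R); rewrite -hdotii hdotZl hdotZr conjC_real hdotii.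
by rewrite rmorphM rmorphXn mulrA expr2.
Qed.

Lemma sqnormDZ (u w : V) (t : R) :
  sqnorm (u + t%:C%C *: w) = sqnorm u + t * (2 * redot u w) + t ^+ 2 * sqnorm w.
Proof.
apply: (@complexI R).
rewrite -hdotii hdotDl !hdotDr !hdotZl !hdotZr conjC_real !hdotii (hdotC u w).
have hdotJ : hdot u w + (hdot u w)^* = 2%:R * (redot u w)%:C%C by exact: addcJ.
rewrite !rmorphD !rmorphM /=.
have -> : (2 : R)%:C%C = 2%:R by rewrite rmorph_nat.
by rewrite -hdotJ; ring.
Qed.

Lemma sqnorm_segment_lt (q y z : V) (t : R) : 0 < t <= 1 ->
  sqnorm (q - y) <= sqnorm (q - z) -> y != z ->
  sqnorm (q + t%:C%C *: (y - q) - y) < sqnorm (q + t%:C%C *: (y - q) - z).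
Proof.
move=> /andP[t_gt0 t_le1] qyz yz; set w := y - q.
have Ey : q + t%:C%C *: w - y = (t - 1)%:C%C *: w.
  by rewrite rmorphB rmorph1 scalerBl scale1r addrAC -opprB addrC.
have Eq : q - y = (-1)%:C%C *: w by rewrite rmorphN scaleN1r /w opprB.
have Ez t' : q + t'%:C%C *: w - z = (q - z) + t'%:C%C *: w by rewrite addrAC.
have Eyz : y - z = (q - z) + 1%:C%C *: w by rewrite -Ez rmorph1 scale1r /w (addrC q) subrK.
have := @sqnorm_gt0 (y - z); rewrite subr_eq0 => /(_ yz).
move: qyz; rewrite Ey Eq Eyz !Ez !sqnormZ !sqnormDZ.
have := sqnorm_ge0 w; nra.
Qed.

Lemma sqnorm_perturb (I : finType) (P : pred I) (y : I -> V) (q w : V) :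
  {in P, forall i, y i != q} ->
  exists2 t : R, 0 < t <= 1 &
    {in P, forall i, sqnorm (q + t%:C%C *: w - q) < sqnorm (q + t%:C%C *: w - y i)}.
Proof.
move=> yq.
have a_gt0 : {in P, forall i, 0 < sqnorm (q - y i)}.
  by move=> i Pi; rewrite sqnorm_gt0 // subr_eq0 eq_sym yq.
have [t t01 ab_gt0] := @small_step_pos _ _ P _ (fun i => 2 * redot (q - y i) w) a_gt0.
exists t => // i Pi; have := ab_gt0 i Pi.
by rewrite addrAC subrr add0r addrAC sqnormZ sqnormDZ; lra.
Qed.
End HermitianNorm.

Lemma FRP (R : realType) (n : nat) (gT : finGroupType) (rho : gT -> 'M[R[i]]_n)
    (x0 : 'cV[R[i]]_n) (H : {set gT}) (x : 'cV[R[i]]_n) :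
  reflect (FR rho x0 H x)
    [forall h in H, (h \notin stab rho x0 H) ==> (hnorm (x - x0) < hnorm (rho h *m x - x0))].
Proof.
apply: (iffP forall_inP) => FRx h hH; first by move/implyP: (FRx h hH).
by apply/implyP; apply: FRx.
Qed.

Lemma transversal_lcoset_eq (gT : finGroupType) (H K : {group gT}) (X : {set gT}) c c' :
  is_transversal X (lcosets H K) K -> c \in X -> c' \in X -> c' \in (c *: H)%g -> c' = c.
Proof.
move=> trX cX c'X c'cH.
have cH_coset : (c *: H)%g \in lcosets H K.
  by apply/imsetP; exists c; rewrite ?lcosetE // (subsetP (transversal_sub trX)).
have /setP XcH := setI_transversal_pblock trX c cH_coset.
have cH : c \in (c *: H)%g by rewrite mem_lcoset mulVg group1.
move: (XcH c) (XcH c'); rewrite !inE cX cH c'X c'cH /=.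
by move=> /esym/eqP c_repr /esym/eqP ->; rewrite -c_repr.
Qed.

Section UnitaryRepresentation.
Variables (R : realType) (n : nat) (gT : finGroupType) (G : {group gT}).
Variables (rho : gT -> 'M[R[i]]_n) (x0 : 'cV[R[i]]_n).
Hypothesis rho_mul : {in G &, forall g h, rho (g * h)%g = rho g *m rho h}.
Hypothesis rho_unitary : forall g, g \in G -> unitary (rho g).
Hypothesis full_orbit : size (undup [seq rho g *m x0 | g <- enum G]) = #|G|.

Lemma rho1 : rho 1%g = 1%:M.
Proof.
have rho11 := rho_mul (group1 G) (group1 G); rewrite mulg1 in rho11.
have U := rho_unitary (group1 G).
by rewrite -[LHS]mul1mx -U -mulmxA -rho11.
Qed.

Lemma rhoV g : g \in G -> rho g *m rho g^-1%g = 1%:M.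
Proof. by move=> gG; rewrite -rho_mul ?groupV // mulgV rho1. Qed.

Lemma sqnorm_rho_subl g (x y : 'cV[R[i]]_n) : g \in G ->
  sqnorm (rho g *m x - y) = sqnorm (x - rho g^-1%g *m y).
Proof.
move=> gG; rewrite -(sqnorm_unitary (x - rho g^-1%g *m y) (rho_unitary gG)).
by rewrite mulmxBr mulmxA rhoV // mul1mx.
Qed.

Lemma orbit_inj : {in G &, injective (fun g => rho g *m x0)}.
Proof.
have orbit_uniq : uniq [seq rho g *m x0 | g <- enum G].
  by apply: negbNE; rewrite -ltn_size_undup full_orbit size_map -cardE ltnn.
by move=> g h gG hG; apply: (uniq_map_inj_in orbit_uniq); rewrite mem_enum.
Qed.

Lemma rho_fix_x0 g : g \in G -> (rho g *m x0 == x0) = (g == 1%g).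
Proof.
move=> gG; apply/eqP/eqP => [gx0|->]; last by rewrite rho1 mul1mx.
by apply: orbit_inj; rewrite //= rho1 mul1mx.
Qed.

Lemma not_FR_nearest (H : {group gT}) p : H \subset G -> ~ FR rho x0 H p ->
  exists2 h, (h \in H) && (h != 1%g) &
    forall h', h' \in H -> sqnorm (rho h *m p - x0) <= sqnorm (rho h' *m (rho h *m p) - x0).
Proof.
move=> sHG /FRP; rewrite negb_forall_in => /existsP[hb /andP[hbH]].
rewrite negb_imply ltr_hnorm -leNgt => /andP[hb_nfix hbp_le].
have hbP : (hb \in H) && (hb != 1%g).
  by rewrite hbH; apply: contraNneq hb_nfix => ->; rewrite inE group1 rho1 mul1mx eqxx.
have [hs /andP[hsH hs1] hs_min] := @arg_minP _ R _ hb [pred h | (h \in H) && (h != 1%g)]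
  (fun h => sqnorm (rho h *m p - x0)) hbP.
exists hs => [|h hH]; first by rewrite hsH.
rewrite mulmxA -rho_mul ?(subsetP sHG) //.
have [->|hhs1] := eqVneq (h * hs)%g 1%g; last by apply: hs_min; rewrite /= groupM ?hhs1.
by rewrite rho1 mul1mx; apply: le_trans hbp_le; exact: hs_min.
Qed.

Lemma FR_segment (H : {group gT}) q t : H \subset G -> 0 < t <= 1 ->
  (forall h, h \in H -> sqnorm (q - x0) <= sqnorm (rho h *m q - x0)) ->
  FR rho x0 H (q + t%:C%C *: (x0 - q)).
Proof.
move=> sHG t01 q_min h hH; have hG := subsetP sHG h hH.
rewrite inE hH rho_fix_x0 //= => h_neq1.
rewrite ltr_hnorm sqnorm_rho_subl //; apply: sqnorm_segment_lt => //.
  by rewrite -sqnorm_rho_subl //; exact: q_min.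
by rewrite eq_sym rho_fix_x0 ?groupV // eq_invg1.
Qed.

Lemma FR_nearest_orbit (K : {group gT}) g c x :
  K \subset G -> g \in K -> c \in K -> FR rho x0 K (rho c *m x) ->
  (forall k, k \in K -> rho k *m x0 != rho g *m x0 ->
     sqnorm (x - rho g *m x0) < sqnorm (x - rho k *m x0)) ->
  c = g^-1%g.
Proof.
move=> sKG gK cK cxFR g_nearest.
have [gG cG] := (subsetP sKG g gK, subsetP sKG c cK).
set k := (g^-1 * c^-1)%g; have kK : k \in K by rewrite groupM ?groupV.
apply/eqP; rewrite eq_sym eq_mulgV1 -/k -(rho_fix_x0 (subsetP sKG k kK)).
apply/contraT => kx0; have := cxFR k kK; rewrite inE kK kx0 => /(_ isT).
rewrite ltr_hnorm mulmxA -rho_mul ?(subsetP sKG k kK) // /k mulgKV.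
rewrite !sqnorm_rho_subl ?groupV // invgK => lt_cg.
have [Ecg|neq_cg] := eqVneq (rho c^-1%g *m x0) (rho g *m x0).
  move: kx0; rewrite /k -(orbit_inj (groupVr cG) gG Ecg) invgK mulgV.
  by rewrite rho1 mul1mx eqxx.
by move/(lt_trans lt_cg): (g_nearest _ (groupVr cK) neq_cg); rewrite ltxx.
Qed.

End UnitaryRepresentation.

Theorem mainTheorem12 (R : realType) (n : nat) (gT : finGroupType)
  (G H K : {group gT}) (rho : gT -> 'M[R[i]]_n) (x0 : 'cV[R[i]]_n)
  (CL : {set gT})
  (rho_mul : {in G &, forall g h, rho (g * h)%g = rho g *m rho h})
  (rho_inj : {in G &, injective rho})
  (rho_unitary : forall g, g \in G -> unitary (rho g))
  (x0_unit : hnorm x0 = 1)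
  (full_orbit : size (undup [seq rho g *m x0 | g <- enum G]) = #|G|)
  (HK : H \subset K) (KG : K \subset G)
  (CL_trans : is_transversal CL (lcosets H K) K)
  (CL_1 : 1%g \in CL)
  (CL_greedy : greed_compatible rho x0 H K CL) :
  forall c, c \in CL -> minimal rho x0 H c.
Proof.
move=> c cCL; have sCLK := transversal_sub CL_trans.
have cK := subsetP sCLK c cCL; have cG := subsetP KG c cK.
have sHG := subset_trans HK KG.
set p := rho c^-1%g *m x0.
have [pFR | /(not_FR_nearest rho_mul rho_unitary sHG)[h /andP[hH h1] q_min]] := FRP rho x0 H p.
  exists p => //; rewrite /p mulmxA.
  by rewrite (rhoV rho_mul rho_unitary) ?groupV ?invgK // mul1mx.
have [hK hG] := (subsetP HK h hH, subsetP sHG h hH).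
set q := rho h *m p.
have qE : q = rho (h * c^-1)%g *m x0 by rewrite /q /p mulmxA rho_mul ?groupV.
have [t t01 q_nearest] := sqnorm_perturb (x0 - q)
  (fun k (kP : k \in [pred k | (k \in K) && (rho k *m x0 != q)]) => (andP kP).2).
have [c' c'CL c'xFR] := CL_greedy _ (FR_segment rho_mul rho_unitary full_orbit sHG t01 q_min).
have c'E : c' = (c * h^-1)%g.
  rewrite -[(c * h^-1)%g]invgK invMg invgK.
  apply: (FR_nearest_orbit rho_mul rho_unitary full_orbit KG _ (subsetP sCLK c' c'CL) c'xFR).
    by rewrite groupM ?groupV.
  by move=> k kK; rewrite -qE => kq; apply: q_nearest; rewrite inE kK.
have c'cH : c' \in (c *: H)%g by rewrite c'E mem_lcoset mulKg groupV.
have := transversal_lcoset_eq CL_trans cCL c'CL c'cH.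
by rewrite c'E -{2}[c]mulg1 => /mulgI/eqP; rewrite eq_invg1 (negbTE h1).
Qed.
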